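(* Let $G=(V,E)$ be a graph with $V=\{1,\ldots,n\}$, let $\mathbf{w}\colon E\to\{1,\ldots,N\}$, and let $w,\ell\in\mathbb{N}$ with $\ell$ even and $\ell\le n$. Define $$\mathcal{M}_{w,\ell}=\{(M_1,M_2)\mid M_1,M_2 \text{ are consistent matchings in } G,\ |M_1|=|M_2|=\ell/2,\ \mathbf{w}(M_1\cup M_2)=w\},$$ $$U_{w,\ell}=\Big\{(E_1,E_2,L)\ \Big|\ E_1,E_2\in\tbinom{E}{\ell/2},\ E_1\cap E_2=\emptyset,\ \mathbf{w}(E_1\cup E_2)=w,\ L\in\tbinom{V}{n-\ell}\Big\},$$ and for $i\in[2n]$ let $A_{w,\ell,i}=\{(E_1,E_2,L)\in U_{w,\ell}\mid i\in V(E_1)\cup L\}$ if $i\in[n]$, and $A_{w,\ell,i}=\{(E_1,E_2,L)\in U_{w,\ell}\mid i-n\in V(E_2)\cup L\}$ if $i\in[n+1,2n]$. Then $$\Big|\bigcap_{i\in[2n]}A_{w,\ell,i}\Big|=|\mathcal{M}_{w,\ell}|.$$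
   Context: Two matchings $M_1,M_2$ of a graph are consistent if $M_1\cap M_2=\emptyset$ and $V(M_1)=V(M_2)$, where $V(M)$ denotes the set of endpoints of edges of $M$. For a set $F$ of edges, $\mathbf{w}(F)=\sum_{e\in F}\mathbf{w}(e)$. $\binom{S}{k}$ is the family of $k$-element subsets of $S$; $[n]=\{1,\ldots,n\}$ and $[a,b]=\{a,\ldots,b\}$. *)

From mathcomp Require Import all_boot.
Set Implicit Arguments. Unset Strict Implicit. Unset Printing Implicit Defensive.

(* A (simple) graph on vertex set 'I_n (= {1..n} shifted to 0-based) is given
   by its edge set E : {set {set 'I_n}}, every edge being a 2-element set. *)
Definition simple_graph n (E : {set {set 'I_n}}) : Prop :=
  forall e, e \in E -> #|e| = 2.

Definition Vof n (M : {set {set 'I_n}}) : {set 'I_n} := \bigcup_(e in M) e.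

Definition matching n (E M : {set {set 'I_n}}) : bool :=
  (M \subset E) &&
  [forall e1 in M, forall e2 in M, (e1 != e2) ==> [disjoint e1 & e2]].

Definition consistent n (M1 M2 : {set {set 'I_n}}) : bool :=
  (M1 :&: M2 == set0) && (Vof M1 == Vof M2).

Definition wsum n (wt : {set 'I_n} -> nat) (F : {set {set 'I_n}}) : nat :=
  \sum_(e in F) wt e.

Definition Mset n (E : {set {set 'I_n}}) (wt : {set 'I_n} -> nat) (w l : nat)
  : {set {set {set 'I_n}} * {set {set 'I_n}}} :=
  [set p : {set {set 'I_n}} * {set {set 'I_n}} | [&& matching E p.1, matching E p.2, consistent p.1 p.2,
              #|p.1| == l./2, #|p.2| == l./2 & wsum wt (p.1 :|: p.2) == w]].

Definition triple n := ({set {set 'I_n}} * {set {set 'I_n}} * {set 'I_n})%type.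

Definition Uset n (E : {set {set 'I_n}}) (wt : {set 'I_n} -> nat) (w l : nat)
  : {set triple n} :=
  [set t : triple n | [&& t.1.1 \subset E, #|t.1.1| == l./2,
              t.1.2 \subset E, #|t.1.2| == l./2,
              t.1.1 :&: t.1.2 == set0,
              wsum wt (t.1.1 :|: t.1.2) == w & #|t.2| == n - l]].

(* A_{w,l,i} for i in [2n], indexed 0-based by 'I_(2n): i < n corresponds to
   vertex i, i >= n to vertex i - n. *)
Definition Aset n (E : {set {set 'I_n}}) (wt : {set 'I_n} -> nat) (w l : nat)
  (i : 'I_(2 * n)) : {set triple n} :=
  [set t in Uset E wt w l |
     if (i < n) then (i : nat) \in [seq val x | x in Vof t.1.1 :|: t.2]
     else ((i : nat) - n) \in [seq val x | x in Vof t.1.2 :|: t.2]].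

From mathcomp Require Import all_boot.
From mathcomp Require Import zify.

Set Implicit Arguments.
Unset Strict Implicit.
Unset Printing Implicit Defensive.

(* If (E1, E2, L) lies in every A_i, then V(E1) and L cover all n vertices.
   Since |V(E1)| <= 2|E1| = l and |L| = n - l, this cover is tight: V(E1) and L
   are complementary, and the edges of E1 are pairwise disjoint. The same holds
   for E2, so E1, E2 are consistent matchings and L = V \ V(E1) is determined by
   them. Conversely every (M1, M2) in M gives the triple (M1, M2, V \ V(M1)). *)

Lemma mem_image_val n (S : {set 'I_n}) (x : 'I_n) :
  ((x : nat) \in [seq val y | y in S]) = (x \in S).
Proof. by rewrite /image_mem (mem_map val_inj) mem_enum. Qed.

Lemma Aset_coverP n (E : {set {set 'I_n}}) wt w l (t : triple n) :
  t \in Uset E wt w l ->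
  reflect (Vof t.1.1 :|: t.2 = setT /\ Vof t.1.2 :|: t.2 = setT)
          (t \in \bigcap_(i < 2 * n) Aset E wt w l i).
Proof.
move=> tU; apply: (iffP bigcapP) => [inA | [cov1 cov2] i _].
  split; apply/setP => v; rewrite in_setT.
    have vlt : v < 2 * n by have := ltn_ord v; lia.
    have := inA (Ordinal vlt) isT; rewrite inE /= ltn_ord.
    by rewrite mem_image_val => /andP[].
  have vlt : n + v < 2 * n by have := ltn_ord v; lia.
  have := inA (Ordinal vlt) isT; rewrite inE /= ltnNge leq_addr /= addKn.
  by rewrite mem_image_val => /andP[].
rewrite inE tU /=; case: ifP => [ilt | /negbT].
  by rewrite (mem_image_val _ (Ordinal ilt)) cov1 in_setT.
rewrite -leqNgt => ige; have ilt : i - n < n by have := ltn_ord i; lia.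
by rewrite (mem_image_val _ (Ordinal ilt)) cov2 in_setT.
Qed.

Lemma setU_cardT_complement (T : finType) (A L : {set T}) k :
  #|A| <= k -> #|L| + k = #|T| -> A :|: L = setT -> #|A| = k /\ L = ~: A.
Proof.
move=> leAk cardL covT.
have := cardsUI A L; rewrite covT cardsT => cardUI.
have cardAL0 : #|A :&: L| = 0 by lia.
split; first by lia.
apply/setP => x; rewrite inE.
have : x \in A :|: L by rewrite covT inE.
have : x \notin A :&: L by rewrite (cards0_eq cardAL0) inE.
by rewrite !inE; case: (x \in A); case: (x \in L).
Qed.

Section SimpleGraph.

Variables (n : nat) (E : {set {set 'I_n}}).
Hypothesis simpleE : simple_graph E.

Lemma sum_card_edges (M : {set {set 'I_n}}) :
  M \subset E -> \sum_(e in M) #|e| = 2 * #|M|.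
Proof.
move=> sME; rewrite (eq_bigr (fun _ => 2)) => [|e eM].
  by rewrite sum_nat_const mulnC.
exact/simpleE/(subsetP sME).
Qed.

Lemma card_Vof_le (M : {set {set 'I_n}}) : M \subset E -> #|Vof M| <= 2 * #|M|.
Proof. by move=> sME; rewrite -sum_card_edges //; apply: leq_card_cover. Qed.

Lemma matching_card_Vof (M : {set {set 'I_n}}) :
  M \subset E -> matching E M = (#|Vof M| == 2 * #|M|).
Proof.
move=> sME; rewrite /matching sME -sum_card_edges // eq_sym.
apply/idP/trivIsetP => [/forall_inP disjM e1 e2 e1M e2M | disjM].
  by have /forall_inP/(_ e2 e2M)/implyP := disjM e1 e1M.
apply/forall_inP => e1 e1M; apply/forall_inP => e2 e2M.
exact/implyP/disjM.
Qed.

Section Counting.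

Variables (wt : {set 'I_n} -> nat) (w l : nat).
Hypotheses (evenl : ~~ odd l) (lel : l <= n).

Lemma double_half_even : 2 * l./2 = l.
Proof. by rewrite mul2n even_halfK. Qed.

Lemma covering_edges_matching (E0 : {set {set 'I_n}}) (L : {set 'I_n}) :
  E0 \subset E -> #|E0| = l./2 -> #|L| = n - l -> Vof E0 :|: L = setT ->
  matching E E0 /\ L = ~: Vof E0.
Proof.
move=> sE0 cardE0 cardL cov.
have [cardV ->] : #|Vof E0| = l /\ L = ~: Vof E0.
  apply: setU_cardT_complement cov.
    by rewrite -double_half_even -cardE0 card_Vof_le.
  by rewrite cardL card_ord subnK.
by rewrite matching_card_Vof // cardV cardE0 double_half_even.
Qed.

Lemma card_compl_Vof_matching (M : {set {set 'I_n}}) :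
  matching E M -> #|M| = l./2 -> #|~: Vof M| = n - l.
Proof.
move=> /[dup] mM /andP[sME _] cardM.
move: mM; rewrite matching_card_Vof // cardM double_half_even => /eqP cardV.
by rewrite cardsCs setCK card_ord cardV.
Qed.

Lemma Uset_bigcap_Aset :
  Uset E wt w l :&: \bigcap_(i < 2 * n) Aset E wt w l i
  = [set (p.1, p.2, ~: Vof p.1) | p in Mset E wt w l].
Proof.
apply/setP => -[[E1 E2] L]; apply/setIP/imsetP.
  case=> tU /(Aset_coverP tU) /= [cov1 cov2].
  move: tU; rewrite inE /= => /and5P[sE1 /eqP cardE1 sE2 /eqP cardE2].
  case/and3P=> disj wE /eqP cardL.
  have [mE1 L1] := covering_edges_matching sE1 cardE1 cardL cov1.
  have [mE2 L2] := covering_edges_matching sE2 cardE2 cardL cov2.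
  exists (E1, E2); last by rewrite L1.
  rewrite inE /= mE1 mE2 /consistent disj wE cardE1 cardE2 !eqxx.
  by rewrite (setC_inj (etrans (esym L1) L2)) eqxx.
case=> -[M1 M2]; rewrite inE /= => + [-> -> ->].
case/and5P=> mM1 mM2 /andP[disj /eqP eqV] /eqP cardM1 /andP[/eqP cardM2 wE].
have tU : (M1, M2, ~: Vof M1) \in Uset E wt w l.
  rewrite inE /= cardM1 cardM2 disj wE (card_compl_Vof_matching mM1 cardM1).
  by case/andP: mM1 => -> _; case/andP: mM2 => -> _; rewrite !eqxx.
split=> //; apply/(Aset_coverP tU) => /=.
by rewrite -eqV setUCr.
Qed.

End Counting.

End SimpleGraph.

Theorem lemma4 (n N : nat) (E : {set {set 'I_n}}) (wt : {set 'I_n} -> nat)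
  (w l : nat) :
  simple_graph E ->
  (forall e, e \in E -> 1 <= wt e <= N) ->
  ~~ odd l -> l <= n ->
  #|Uset E wt w l :&: \bigcap_(i < 2 * n) Aset E wt w l i| = #|Mset E wt w l|.
Proof.
move=> simpleE _ evenl lel.
rewrite Uset_bigcap_Aset // card_imset // => -[M1 M2] [M1' M2'] /=.
by case=> -> ->.
Qed.
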